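(* Let $\iota$ be the base type. There is no closed term $\cdot\vdash t:\iota\to\Diamond\iota$ in $\lambda^{S}$ or in $\lambda^{SJ}$ (so axiom R, $A\to\Diamond A$, is not derivable in these calculi), and there is no closed term $\cdot\vdash t:\Diamond\Diamond\iota\to\Diamond\iota$ in $\lambda^{S}$ or in $\lambda^{SR}$ (so axiom J, $\Diamond\Diamond A\to\Diamond A$, is not derivable in these calculi).
   Context: Types: $A,B ::= \iota \mid 1 \mid A\times B \mid A\to B \mid \Diamond A$ ($\iota$ a base type); contexts are lists of distinct typed variables, $\cdot$ the empty context. Simply typed terms: variables, $()$, $\langle t,u\rangle$, $\mathsf{fst}\,t$, $\mathsf{snd}\,t$, $\lambda x.t$, $t\,u$ with the standard typing rules. Modal term formers: (letmap) if $\Gamma\vdash t:\Diamond A$ and $\Gamma,x:A\vdash u:B$ then $\Gamma\vdash\mathsf{letmap}\ x=t\ \mathsf{in}\ u:\Diamond B$; (ret) if $\Gamma\vdash t:A$ then $\Gamma\vdash\mathsf{ret}\,t:\Diamond A$; (let) if $\Gamma\vdash t:\Diamond A$ and $\Gamma,x:A\vdash u:\Diamond B$ then $\Gamma\vdash\mathsf{let}\ x=t\ \mathsf{in}\ u:\Diamond B$. The calculus $\lambda^{S}$ has the simply typed terms plus letmap; $\lambda^{SR}$ has letmap and ret; $\lambda^{SJ}$ has letmap and let. *)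

(* Variables are de Bruijn indices into the context (a list of types), which
   represents a context of distinct typed variables; index 0 is the most
   recently bound variable. *)
From Stdlib Require Import List.
Import ListNotations.

Inductive ty : Type :=
| TBase : ty
| TUnit : ty
| TProd : ty -> ty -> ty
| TArr  : ty -> ty -> ty
| TDia  : ty -> ty.

Inductive tm : Type :=
| tvar : nat -> tm
| tunit : tm
| tpair : tm -> tm -> tm
| tfst : tm -> tm
| tsnd : tm -> tm
| tlam : ty -> tm -> tm
| tapp : tm -> tm -> tm
| tletmap : tm -> tm -> tm    (* letmap x = t in u ; x bound in u *)
| tret : tm -> tm
| tlet : tm -> tm -> tm.      (* let x = t in u ; x bound in u *)

Inductive calculus : Type := lamS | lamSR | lamSJ.

Definition has_ret (c : calculus) : Prop :=
  match c with lamSR => True | _ => False end.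
Definition has_let (c : calculus) : Prop :=
  match c with lamSJ => True | _ => False end.

Definition ctx := list ty.

Inductive has_type (c : calculus) : ctx -> tm -> ty -> Prop :=
| T_var : forall G n A, nth_error G n = Some A -> has_type c G (tvar n) A
| T_unit : forall G, has_type c G tunit TUnit
| T_pair : forall G t u A B,
    has_type c G t A -> has_type c G u B -> has_type c G (tpair t u) (TProd A B)
| T_fst : forall G t A B, has_type c G t (TProd A B) -> has_type c G (tfst t) A
| T_snd : forall G t A B, has_type c G t (TProd A B) -> has_type c G (tsnd t) B
| T_lam : forall G t A B,
    has_type c (A :: G) t B -> has_type c G (tlam A t) (TArr A B)
| T_app : forall G t u A B,
    has_type c G t (TArr A B) -> has_type c G u A -> has_type c G (tapp t u) B
| T_letmap : forall G t u A B,
    has_type c G t (TDia A) -> has_type c (A :: G) u B ->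
    has_type c G (tletmap t u) (TDia B)
| T_ret : forall G t A,
    has_ret c -> has_type c G t A -> has_type c G (tret t) (TDia A)
| T_let : forall G t u A B,
    has_let c -> has_type c G t (TDia A) -> has_type c (A :: G) u (TDia B) ->
    has_type c G (tlet t u) (TDia B).

(* Interpret types in an intuitionistic Kripke model (worlds preordered by
   [le], base type an upward-closed predicate) with [◇A] true at [w] when every
   future world has an [R]-successor satisfying [A], where [R] is contained in
   [le].  Every typable term is sound when [R] is reflexive (needed for [ret])
   or transitive (needed for [let]).  With [R] empty, [ι → ◇ι] fails; with the
   reflexive, non-transitive step relation [v = w ∨ v = w+1] on [nat] and
   [ι] true from world 2 on, [◇◇ι] holds at 0 but [◇ι] does not. *)
From Stdlib Require Import List Lia Relation_Definitions.
Import ListNotations.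

Section KripkeSemantics.

Variable W : Type.
Variable le : W -> W -> Prop.
Hypothesis le_refl : forall w, le w w.
Hypothesis le_trans : forall u v w, le u v -> le v w -> le u w.
Variable R : relation W.
Hypothesis R_le : forall w v, R w v -> le w v.
Variable base : W -> Prop.
Hypothesis base_mono : forall w w', le w w' -> base w -> base w'.

Fixpoint interp (A : ty) (w : W) : Prop :=
  match A with
  | TBase => base w
  | TUnit => True
  | TProd A B => interp A w /\ interp B w
  | TArr A B => forall w', le w w' -> interp A w' -> interp B w'
  | TDia A => forall w', le w w' -> exists v, R w' v /\ interp A v
  end.

Lemma interp_mono A w w' : le w w' -> interp A w -> interp A w'.
Proof.
  revert w w'; induction A; simpl; intros w w' Hle H.
  - eauto.
  - exact I.
  - destruct H; split; eauto.
  - intros w'' Hle' HA; apply H; eauto.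
  - intros w'' Hle'; apply H; eauto.
Qed.

Fixpoint interp_ctx (G : ctx) (w : W) : Prop :=
  match G with
  | [] => True
  | A :: G => interp A w /\ interp_ctx G w
  end.

Lemma interp_ctx_mono G w w' : le w w' -> interp_ctx G w -> interp_ctx G w'.
Proof. induction G; simpl; intuition eauto using interp_mono. Qed.

Lemma interp_ctx_nth G n A w :
  nth_error G n = Some A -> interp_ctx G w -> interp A w.
Proof.
  revert n; induction G as [|B G IHG]; intros [|n] Hn HG; simpl in *;
    try discriminate.
  - injection Hn as <-; tauto.
  - apply (IHG n); tauto.
Qed.

Lemma has_type_sound c G t A :
  has_type c G t A ->
  (has_ret c -> reflexive W R) ->
  (has_let c -> transitive W R) ->
  forall w, interp_ctx G w -> interp A w.
Proof.
  intros Ht Hret Hlet; induction Ht; intros w HG; simpl in *.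
  - eapply interp_ctx_nth; eauto.
  - exact I.
  - split; auto.
  - apply (IHHt w HG).
  - apply (IHHt w HG).
  - intros w' Hw' HA; apply IHHt; split; eauto using interp_ctx_mono.
  - apply (IHHt1 w HG); auto.
  - intros w' Hw'; destruct (IHHt1 w HG w' Hw') as [v [Hv HA]].
    exists v; split; auto.
    apply IHHt2; split; eauto using interp_ctx_mono.
  - intros w' Hw'; exists w'; split; [apply Hret; auto | eauto using interp_mono].
  - intros w' Hw'; destruct (IHHt1 w HG w' Hw') as [v [Hv HA]].
    assert (HGv : interp_ctx G v) by eauto using interp_ctx_mono.
    destruct (IHHt2 v (conj HA HGv) v (le_refl v)) as [z [Hz HB]].
    exists z; split; [eapply Hlet; eauto | exact HB].
Qed.

End KripkeSemantics.

Lemma closed_has_type_sound c t A :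
  has_type c [] t A ->
  forall (R : relation nat) (base : nat -> Prop),
  (forall w v, R w v -> w <= v) ->
  (forall w w', w <= w' -> base w -> base w') ->
  (has_ret c -> reflexive nat R) ->
  (has_let c -> transitive nat R) ->
  interp nat le R base A 0.
Proof.
  intros Ht R base R_le base_mono Hret Hlet.
  eapply has_type_sound with (G := []); eauto with arith.
  exact I.
Qed.

Lemma not_has_type_unit_axiom c t :
  ~ has_ret c -> ~ has_type c [] t (TArr TBase (TDia TBase)).
Proof.
  intros Hnoret Ht.
  pose proof (closed_has_type_sound c t _ Ht (fun _ _ => False) (fun _ => True))
    as Hvalid; simpl in Hvalid.
  destruct (Hvalid ltac:(tauto) ltac:(auto) ltac:(tauto) ltac:(firstorder)
              0 (le_n 0) I 0 (le_n 0)) as [v [[] _]].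
Qed.

Lemma not_has_type_join_axiom c t :
  ~ has_let c -> ~ has_type c [] t (TArr (TDia (TDia TBase)) (TDia TBase)).
Proof.
  intros Hnolet Ht.
  pose proof (closed_has_type_sound c t _ Ht (fun w v => v = w \/ v = S w)
                (fun w => 2 <= w)) as Hvalid; simpl in Hvalid.
  assert (Hdiadia : forall w', 0 <= w' ->
            exists v, (v = w' \/ v = S w') /\
              forall w'', v <= w'' -> exists u, (u = w'' \/ u = S w'') /\ 2 <= u).
  { intros w' _; exists (S w'); split; auto.
    intros w'' Hw''; exists (S w''); split; auto; lia. }
  destruct (Hvalid ltac:(lia) ltac:(lia) ltac:(intros _ w; auto) ltac:(tauto)
              0 (le_n 0) Hdiadia 0 (le_n 0)) as [v [[-> | ->] Hv]]; lia.
Qed.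

Theorem corollary5p3 :
  (forall t, ~ has_type lamS  [] t (TArr TBase (TDia TBase))) /\
  (forall t, ~ has_type lamSJ [] t (TArr TBase (TDia TBase))) /\
  (forall t, ~ has_type lamS  [] t (TArr (TDia (TDia TBase)) (TDia TBase))) /\
  (forall t, ~ has_type lamSR [] t (TArr (TDia (TDia TBase)) (TDia TBase))).
Proof.
  repeat split; intro t.
  - apply not_has_type_unit_axiom; simpl; tauto.
  - apply not_has_type_unit_axiom; simpl; tauto.
  - apply not_has_type_join_axiom; simpl; tauto.
  - apply not_has_type_join_axiom; simpl; tauto.
Qed.
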